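(* Fix an episode $k\ge1$ of algorithm IHMDP-VCG and condition on $\mathcal F^{[k-1]}$, the $\sigma$-algebra of all events up to the end of episode $k-1$. Let $\nu^{[k]}$ be the stationary distribution of the Markov chain on $\mathcal S$ with transition matrix $P^{\pi^{[k]}}(s'|s)=\sum_a P(s'|s,a)\pi^{[k]}(a|s)$, and $\rho^{[k]}(s,a)=\nu^{[k]}(s)\pi^{[k]}(a|s)$. For a round $t$ of episode $k$, let $\mathbb E[\nu^t](s)=\Pr(s^t=s\mid\mathcal F^{[k-1]})$ and $\mathbb E[\rho^t](s,a)=\mathbb E[\nu^t](s)\pi^{[k]}(a|s)$. Then for every round $t$ in the stationary phase of episode $k$, $\|\mathbb E[\rho^t]-\rho^{[k]}\|_1=\|\mathbb E[\nu^t]-\nu^{[k]}\|_1\le 2/\sqrt k$.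
   Context: $\mathcal S,\mathcal A$ finite, $S=|\mathcal S|$, $P$ a transition kernel with $P(s'|s,a)\ge\alpha>0$ for all $s,s',a$; states evolve by $s^{t+1}\sim P(\cdot|s^t,a^t)$. In algorithm IHMDP-VCG, time is divided into episodes $k=1,2,\dots$; episode $k$ starts at round $\tau^{[k]}$ and consists of a mixing phase of $d^{[k]}=\frac{\log k}{\alpha S}$ rounds (rounds $\tau^{[k]},\dots,\tau^{[k]}+d^{[k]}-1$) followed by a stationary phase (subsequent rounds of the episode). A stationary policy $\pi^{[k]}$, determined by the history up to the end of episode $k-1$, is used to draw $a^t\sim\pi^{[k]}(\cdot|s^t)$ in every round $t$ of episode $k$ (both phases). *)

From mathcomp Require Import all_boot all_order all_algebra.
From mathcomp Require Import reals exp.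
Set Implicit Arguments. Unset Strict Implicit. Unset Printing Implicit Defensive.
Import Order.TTheory GRing.Theory Num.Theory.
Local Open Scope ring_scope.

Section Defs.
Variables (R : realType) (S A : finType).

Definition is_distr (mu : S -> R) : Prop :=
  (forall s, 0 <= mu s) /\ \sum_(s : S) mu s = 1.

(* transition kernel P(s'|s,a) written P s a s' *)
Definition is_kernel (P : S -> A -> S -> R) : Prop :=
  (forall s a s', 0 <= P s a s') /\ (forall s a, \sum_(s' : S) P s a s' = 1).

(* stationary policy pi(a|s) written pi s a *)
Definition is_policy (pi : S -> A -> R) : Prop :=
  (forall s a, 0 <= pi s a) /\ (forall s, \sum_(a : A) pi s a = 1).

Definition Ppi (P : S -> A -> S -> R) (pi : S -> A -> R) (s s' : S) : R :=
  \sum_(a : A) P s a s' * pi s a.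

Definition is_stationary (P : S -> A -> S -> R) (pi : S -> A -> R) (nu : S -> R) : Prop :=
  is_distr nu /\ forall s', \sum_(s : S) nu s * Ppi P pi s s' = nu s'.

(* Law of s^(tau+n), given the (conditional) law mu0 of s^tau, when in every
   round a ~ pi(.|s) and s' ~ P(.|s,a):
   Pr(s^{t+1}=s') = sum_{s,a} Pr(s^t = s) pi(a|s) P(s'|s,a). *)
Fixpoint state_law (P : S -> A -> S -> R) (pi : S -> A -> R) (mu0 : S -> R)
    (n : nat) : S -> R :=
  match n with
  | 0 => mu0
  | n'.+1 => fun s' =>
      \sum_(s : S) \sum_(a : A) state_law P pi mu0 n' s * pi s a * P s a s'
  end.

Definition sa_dist (pi : S -> A -> R) (nu : S -> R) (sa : S * A) : R :=
  nu sa.1 * pi sa.1 sa.2.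

Definition l1_S (f g : S -> R) : R := \sum_(s : S) `|f s - g s|.
Definition l1_SA (f g : S * A -> R) : R := \sum_(sa : S * A) `|f sa - g sa|.

End Defs.

From mathcomp Require Import all_boot all_order all_algebra.
From mathcomp Require Import boolp reals sequences exp.
From mathcomp Require Import lra.
Set Implicit Arguments. Unset Strict Implicit. Unset Printing Implicit Defensive.
Import Order.TTheory GRing.Theory Num.Theory.
Local Open Scope ring_scope.

(* Since P^pi(s'|s) >= alpha for all s, s', the chain satisfies Doeblin's
   condition: on a vector f with zero total mass, one step of the chain acts
   like the row-wise residual P^pi - alpha (the constant part alpha kills f),
   whose rows have mass 1 - alpha |S|.  Hence the l1 distance between the law
   of s^t and nu shrinks by 1 - alpha |S| per round; starting from at most 2,
   after n >= ln k / (alpha |S|) rounds it is at most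
   2 (1 - alpha |S|)^n <= 2 exp(-alpha |S| n) <= 2 / k <= 2 / sqrt k.
   Multiplying both laws by pi(a|s) leaves the l1 distance unchanged because
   each row of pi has mass 1. *)

Definition step_law {R : pzRingType} {S : finType} (M : S -> S -> R)
    (mu : S -> R) : S -> R :=
  fun s' => \sum_(s : S) mu s * M s s'.

Section DoeblinContraction.
Variables (R : realType) (S : finType) (M : S -> S -> R) (alpha : R).
Hypotheses (M_ge : forall s s', alpha <= M s s')
           (M_row : forall s, \sum_(s' : S) M s s' = 1).

Lemma doeblin_mass_le1 : alpha * #|S|%:R <= 1.
Proof.
have [s0 _ | S0] := pickP (@predT S).
  rewrite -[X in _ <= X](M_row s0) mulr_natr -sumr_const; exact: ler_sum.
by rewrite (eq_card0 S0) mulr0.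
Qed.

Lemma sum_step_law mu : \sum_(s' : S) step_law M mu s' = \sum_(s : S) mu s.
Proof.
rewrite /step_law exchange_big /=; apply: eq_bigr => s _.
by rewrite -big_distrr /= M_row mulr1.
Qed.

Lemma l1_zero_mass_contract (f : S -> R) : \sum_(s : S) f s = 0 ->
  \sum_(s' : S) `|\sum_(s : S) f s * M s s'|
    <= (1 - alpha * #|S|%:R) * \sum_(s : S) `|f s|.
Proof.
move=> f_mass0.
have residual s' : \sum_s f s * M s s' = \sum_s f s * (M s s' - alpha).
  under [RHS]eq_bigr do rewrite mulrBr.
  by rewrite sumrB -big_distrl /= f_mass0 mul0r subr0.
under eq_bigr do rewrite residual.
apply: (@le_trans _ _ (\sum_s' \sum_s `|f s| * (M s s' - alpha))).
  apply: ler_sum => s' _; apply: (le_trans (ler_norm_sum _ _ _)).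
  apply: ler_sum => s _.
  by rewrite normrM (@ger0_norm _ (_ - alpha)) // subr_ge0.
rewrite exchange_big big_distrr /=; apply: ler_sum => s _.
by rewrite -big_distrr /= sumrB M_row sumr_const mulr_natr mulrC.
Qed.

Lemma l1_step_law_contract mu nu :
  \sum_(s : S) mu s = \sum_(s : S) nu s ->
  l1_S (step_law M mu) (step_law M nu) <= (1 - alpha * #|S|%:R) * l1_S mu nu.
Proof.
move=> same_mass; rewrite /l1_S /step_law.
under eq_bigr do rewrite -sumrB; under eq_bigr do under eq_bigr do rewrite -mulrBl.
by apply: l1_zero_mass_contract; rewrite sumrB same_mass subrr.
Qed.

End DoeblinContraction.

Lemma l1_distr_le2 (R : realType) (S : finType) (mu nu : S -> R) :
  is_distr mu -> is_distr nu -> l1_S mu nu <= 2.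
Proof.
move=> [mu_ge0 mu_sum] [nu_ge0 nu_sum].
apply: (@le_trans _ _ (\sum_s (mu s + nu s))).
  apply: ler_sum => s _.
  by apply: (le_trans (ler_normB _ _)); rewrite !ger0_norm.
by rewrite big_split /= mu_sum nu_sum.
Qed.

Lemma distr_card_gt0 (R : realType) (S : finType) (mu : S -> R) :
  is_distr mu -> (0 < #|S|)%N.
Proof.
move=> [_ mu_sum]; apply/card_gt0P.
have [s0 _ | S0] := pickP (@predT S); first by exists s0.
by move: mu_sum; rewrite big_pred0 // => /eqP; rewrite eq_sym oner_eq0.
Qed.

Lemma l1_SA_sa_dist (R : realType) (S A : finType) (pi : S -> A -> R)
    (mu nu : S -> R) :
  is_policy pi -> l1_SA (sa_dist pi mu) (sa_dist pi nu) = l1_S mu nu.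
Proof.
move=> [pi_ge0 pi_row].
rewrite /l1_SA /l1_S /sa_dist.
rewrite -(pair_bigA _ (fun s a => `|mu s * pi s a - nu s * pi s a|)) /=.
apply: eq_bigr => s _.
under eq_bigr do rewrite -mulrBl normrM (ger0_norm (pi_ge0 s _)).
by rewrite -big_distrr /= pi_row mulr1.
Qed.

Section PolicyChain.
Variables (R : realType) (S A : finType) (P : S -> A -> S -> R) (pi : S -> A -> R).
Hypotheses (P_kernel : is_kernel P) (pi_policy : is_policy pi).

Lemma Ppi_row_sum s : \sum_(s' : S) Ppi P pi s s' = 1.
Proof.
rewrite /Ppi exchange_big /= -(pi_policy.2 s); apply: eq_bigr => a _.
by rewrite -big_distrl /= P_kernel.2 mul1r.
Qed.

Lemma Ppi_ge (alpha : R) : (forall s a s', alpha <= P s a s') ->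
  forall s s', alpha <= Ppi P pi s s'.
Proof.
move=> P_ge s s'; rewrite -[alpha]mulr1 -(pi_policy.2 s) big_distrr /=.
by apply: ler_sum => a _; apply: ler_wpM2r; [exact: pi_policy.1 | exact: P_ge].
Qed.

Lemma state_lawS mu0 n :
  state_law P pi mu0 n.+1 = step_law (Ppi P pi) (state_law P pi mu0 n).
Proof.
apply/funext => s'; apply: eq_bigr => s _; rewrite /Ppi big_distrr /=.
by apply: eq_bigr => a _; rewrite -mulrA (mulrC (pi s a)).
Qed.

Lemma sum_state_law mu0 n : is_distr mu0 ->
  \sum_(s : S) state_law P pi mu0 n s = 1.
Proof.
move=> mu0_distr; elim: n => [|n IH]; first exact: mu0_distr.2.
by rewrite state_lawS (sum_step_law Ppi_row_sum).
Qed.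

Lemma l1_state_law_le (alpha : R) mu0 nu n :
  (forall s a s', alpha <= P s a s') -> is_distr mu0 -> is_stationary P pi nu ->
  l1_S (state_law P pi mu0 n) nu <= (1 - alpha * #|S|%:R) ^+ n * 2.
Proof.
move=> P_ge mu0_distr [nu_distr nu_fixed].
have nu_step : step_law (Ppi P pi) nu = nu by apply/funext => s'; exact: nu_fixed.
have c_ge0 : 0 <= 1 - alpha * #|S|%:R.
  by rewrite subr_ge0 (doeblin_mass_le1 (Ppi_ge P_ge) Ppi_row_sum).
elim: n => [|n IH]; first by rewrite mul1r l1_distr_le2.
rewrite state_lawS -{1}nu_step exprS -mulrA.
apply: (le_trans (l1_step_law_contract (Ppi_ge P_ge) Ppi_row_sum _)).
  by rewrite sum_state_law // nu_distr.2.
exact: ler_wpM2l.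
Qed.

End PolicyChain.

Lemma expr_contraction_le_inv (R : realType) (c : R) (k n : nat) :
  0 < c <= 1 -> (0 < k)%N -> ln (k%:R : R) / c <= n%:R ->
  (1 - c) ^+ n <= (k%:R)^-1.
Proof.
move=> /andP[c_gt0 c_le1] k_gt0 n_large.
apply: (@le_trans _ _ (expR (- c) ^+ n)).
  by rewrite lerXn2r ?nnegrE ?expR_ge0 ?subr_ge0 ?expR_ge1Dx.
rewrite -expRM_natr -[(k%:R)^-1]lnK ?posrE ?invr_gt0 ?ltr0n // lnV ?posrE ?ltr0n //.
by rewrite ler_expR mulNr lerN2 mulrC -ler_pdivrMr.
Qed.

Lemma invr_le_inv_sqrt (R : rcfType) (x : R) : 1 <= x -> x^-1 <= (Num.sqrt x)^-1.
Proof.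
move=> x_ge1.
have x_ge0 : 0 <= x := le_trans ler01 x_ge1.
have sqrt_ge1 : 1 <= Num.sqrt x by rewrite -sqrtr1 ler_sqrt.
have x_sq : x = Num.sqrt x ^+ 2 by rewrite sqr_sqrtr.
rewrite lef_pV2 ?posrE ?(lt_le_trans ltr01) // {2}x_sq; nra.
Qed.

Theorem lemma2 (R : realType) (S A : finType)
    (P : S -> A -> S -> R) (alpha : R) (pi : S -> A -> R)
    (k tau tau_next t : nat) (mu0 nu : S -> R) :
  0 < alpha ->
  is_kernel P ->
  (forall s a s', alpha <= P s a s') ->
  is_policy pi ->
  is_distr mu0 ->
  is_stationary P pi nu ->
  (1 <= k)%N ->
  (tau <= t)%N -> (t < tau_next)%N ->
  ln (k%:R) / (alpha * #|S|%:R) <= (t - tau)%:R ->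
  l1_SA (sa_dist pi (state_law P pi mu0 (t - tau))) (sa_dist pi nu)
    = l1_S (state_law P pi mu0 (t - tau)) nu
  /\ l1_S (state_law P pi mu0 (t - tau)) nu <= 2 / Num.sqrt (k%:R).
Proof.
move=> alpha_gt0 P_kernel P_ge pi_policy mu0_distr nu_stat k_ge1 _ _ mixed.
split; first exact: l1_SA_sa_dist.
apply: le_trans (l1_state_law_le P_kernel pi_policy _ P_ge mu0_distr nu_stat) _.
have doeblin : 0 < alpha * #|S|%:R <= 1.
  rewrite mulr_gt0 ?ltr0n ?(distr_card_gt0 mu0_distr) //=.
  exact: doeblin_mass_le1 (Ppi_ge pi_policy P_ge) (Ppi_row_sum P_kernel pi_policy).
rewrite mulrC ler_pM2l //.
apply: le_trans (expr_contraction_le_inv doeblin k_ge1 mixed) _.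
by rewrite invr_le_inv_sqrt ?ler1n.
Qed.
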